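(* Consider the $k$-means++ seeding algorithm run for $k+\Delta$ steps on a finite set $\mathbf{X}\subset\mathbb{R}^d$ with a fixed optimal $k$-clustering $\mathcal{P}=\{P_1,\dots,P_k\}$. For any cluster $P\in\mathcal{P}$ and any $t\le k+\Delta$ such that $\Delta-M(C_t)\ge2$, $$\mathbb{E}\big[U(P,C_{k+\Delta})\mid C_t\big]\le\frac{\widetilde H_t(\mathbf{X})}{e\,(\Delta-M(C_t)-1)}.$$
   Context: For a finite $C\subset\mathbb{R}^d$, $\mathrm{cost}(x,C)=\min_{c\in C}\|x-c\|^2$, $\mathrm{cost}(\mathbf{Y},C)=\sum_{x\in\mathbf{Y}}\mathrm{cost}(x,C)$, $\mathrm{OPT}_i(\mathbf{Y})=\min_{|C|=i}\mathrm{cost}(\mathbf{Y},C)$. $k$-means++ seeding: $c_1$ uniform from $\mathbf{X}$, $C_1=\{c_1\}$; $C_{t+1}=C_t\cup\{x\}$ with $x$ chosen with probability $\mathrm{cost}(x,C_t)/\mathrm{cost}(\mathbf{X},C_t)$; centers are ordered by the time they are chosen. $P_1,\dots,P_k$ is a fixed optimal $k$-means clustering of $\mathbf{X}$. $P_i$ is covered by $C$ if $C\cap P_i\ne\varnothing$. $U(P_i,C)=\mathrm{cost}(P_i,C)$ if $P_i$ is not covered by $C$ and $0$ otherwise. A center $c\in C$ is a miss if an earlier center of $C$ lies in the same cluster $P_i$ as $c$; $M(C)$ is the number of misses. $\widetilde H_t(P_i)=\mathrm{cost}(P_i,C_{t_i})$ if $P_i$ is covered by $C_t$, where $t_i\le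 t$ is the first time $P_i$ is covered, and $\widetilde H_t(P_i)=5\,\mathrm{OPT}_1(P_i)$ otherwise; $\widetilde H_t(\mathbf{X})=\sum_i\widetilde H_t(P_i)$. *)

From HB Require Import structures.
From mathcomp Require Import all_boot all_order all_algebra.
From mathcomp Require Import all_classical all_reals all_analysis.
Set Implicit Arguments.
Unset Strict Implicit.
Unset Printing Implicit Defensive.
Import Order.TTheory GRing.Theory Num.Theory.
Local Open Scope ring_scope.
Local Open Scope classical_set_scope.

(* Data set X is encoded by a finite index type T and an injective embedding
   pos : T -> R^d (row vectors).  Centers are data points, i.e. elements of T;
   an ordered set of centers C_t is a sequence of elements of T. *)

Definition sqnorm (R : realType) (d : nat) (v : 'rV[R]_d) : R :=
  \sum_(j < d) v ord0 j ^+ 2.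

(* cost(x, C) = min_{c in C} ||x - c||^2 (C nonempty; 0 for empty C, never used) *)
Definition costpt (R : realType) (d : nat) (T : finType) (pos : T -> 'rV[R]_d)
    (x : T) (C : seq T) : R :=
  match C with
  | [::] => 0
  | c :: cs => foldr (fun c' m => Num.min (sqnorm (pos x - pos c')) m)
                     (sqnorm (pos x - pos c)) cs
  end.

Definition costset (R : realType) (d : nat) (T : finType) (pos : T -> 'rV[R]_d)
    (Y : pred T) (C : seq T) : R :=
  \sum_(x | Y x) costpt pos x C.

Definition OPT1 (R : realType) (d : nat) (T : finType) (pos : T -> 'rV[R]_d)
    (Y : pred T) : R :=
  inf [set r : R | exists c : 'rV[R]_d, r = \sum_(x | Y x) sqnorm (pos x - c)].

Definition cluster (T : finType) (k : nat) (P : T -> 'I_k) (i : 'I_k) : pred T :=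
  fun x => P x == i.

Definition optimal_clustering (R : realType) (d : nat) (T : finType)
    (pos : T -> 'rV[R]_d) (k : nat) (P : T -> 'I_k) : Prop :=
  forall Q : T -> 'I_k,
    \sum_(i < k) OPT1 pos (cluster P i) <= \sum_(i < k) OPT1 pos (cluster Q i).

Definition covered (T : finType) (k : nat) (P : T -> 'I_k) (i : 'I_k) (C : seq T) : bool :=
  has (fun y => P y == i) C.

Definition Uncov (R : realType) (d : nat) (T : finType) (pos : T -> 'rV[R]_d)
    (k : nat) (P : T -> 'I_k) (i : 'I_k) (C : seq T) : R :=
  if covered P i C then 0 else costset pos (cluster P i) C.

Fixpoint misses_aux (T : finType) (k : nat) (P : T -> 'I_k) (pre s : seq T) : nat :=
  match s with
  | [::] => 0%N
  | x :: s' => ((if has (fun y => P y == P x) pre then 1 else 0)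
                 + misses_aux P (rcons pre x) s')%N
  end.
Definition misses (T : finType) (k : nat) (P : T -> 'I_k) (C : seq T) : nat :=
  misses_aux P [::] C.

(* \tilde H_t(X) for C = C_t; C_{t_i} = take t_i C where t_i is the first time
   P_i is covered. *)
Definition Htilde (R : realType) (d : nat) (T : finType) (pos : T -> 'rV[R]_d)
    (k : nat) (P : T -> 'I_k) (C : seq T) : R :=
  \sum_(i < k)
    (if covered P i C
     then costset pos (cluster P i) (take (find (fun y => P y == i) C).+1 C)
     else 5 * OPT1 pos (cluster P i)).

(* one step of k-means++ seeding: probability of choosing x given the current
   centers pre.  First center uniform.  Convention if cost(X, pre) = 0
   (all points already chosen): uniform. *)
Definition step (R : realType) (d : nat) (T : finType) (pos : T -> 'rV[R]_d)
    (pre : seq T) (x : T) : R :=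
  match pre with
  | [::] => (#|T|%:R)^-1
  | _ => let tot := costset pos predT pre in
         if tot == 0 then (#|T|%:R)^-1 else costpt pos x pre / tot
  end.

Fixpoint pr_aux (R : realType) (d : nat) (T : finType) (pos : T -> 'rV[R]_d)
    (pre s : seq T) : R :=
  match s with
  | [::] => 1
  | x :: s' => step pos pre x * pr_aux pos (rcons pre x) s'
  end.

Definition seqprob (R : realType) (d : nat) (T : finType) (pos : T -> 'rV[R]_d)
    (s : seq T) : R := pr_aux pos [::] s.

Definition cond_exp (R : realType) (d : nat) (T : finType) (pos : T -> 'rV[R]_d)
    (n : nat) (f : seq T -> R) (c : seq T) : R :=
  (\sum_(s : n.-tuple T | take (size c) s == c) seqprob pos s * f s)
    / seqprob pos c.

From Pilot Require Import Defs.
From HB Require Import structures.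
From mathcomp Require Import all_boot all_order all_algebra.
From mathcomp Require Import all_classical all_reals all_analysis.
From mathcomp Require Import ring lra zify.
Import Order.TTheory GRing.Theory Num.Theory.
Local Open Scope ring_scope.
Set Implicit Arguments.
Unset Strict Implicit.
Unset Printing Implicit Defensive.

(* Write M, U, H for the number of misses M(C), the uncovered cost U(P_i, C) and
   H~(C) of a center sequence C.  By induction on the number m of seeding steps
   left before k + Delta centers are chosen we prove (potential_bound)
       E[U(P_i, C_{|C|+m}) | C] <= a(M) U + b(M) H,
   with explicit coefficients a, b depending on the number Delta - M of misses
   still allowed (section Coefficients).  In the induction step the next center
   x is drawn with probability proportional to cost(x, C): a center in P_i
   makes U vanish, a miss increments M, and a center in a new cluster P_j
   replaces 5 OPT_1(P_j) in H by cost(P_j, C + x), whose weighted average is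
   at most 5 OPT_1(P_j) by the averaging lemma d2_sample_cluster_bound.  The
   coefficients are chosen so that the resulting inequality reduces to a
   perfect square (coef_step_identity).  For the given prefix c, with
   L = Delta - M(c), one has a = 0 and b = q^L / (L+1) where q = L / (L+1), and
   q^(L+1) <= 1/e yields H~ / (e (L-1)). *)

Section Cost.
Variables (R : realType) (d : nat) (T : finType) (pos : T -> 'rV[R]_d).

Definition sqdist (x y : T) : R := sqnorm (pos x - pos y).

Lemma sqnorm_ge0 (v : 'rV[R]_d) : 0 <= sqnorm v.
Proof. by apply: sumr_ge0 => j _; rewrite sqr_ge0. Qed.

Lemma sqdistC x y : sqdist x y = sqdist y x.
Proof.
by rewrite /sqdist /sqnorm; apply: eq_bigr => j _; rewrite !mxE -sqrrN opprB.
Qed.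

Lemma sqdist_triangle x y z : sqdist x z <= 2 * sqdist x y + 2 * sqdist y z.
Proof.
rewrite /sqdist /sqnorm !mulr_sumr -big_split /=; apply: ler_sum => j _.
rewrite !mxE.
set a := pos x ord0 j; set b := pos y ord0 j; set c := pos z ord0 j.
have := sqr_ge0 (a - 2 * b + c); nra.
Qed.

Lemma costpt_le x C c : c \in C -> costpt pos x C <= sqdist x c.
Proof.
case: C => [//|c0 cs] /=.
elim: cs c0 => [|c1 cs IH] c0 /=; first by rewrite inE => /eqP ->.
rewrite !inE => Hc.
have [/eqP->|ne] := boolP (c == c1); first by rewrite ge_min lexx.
rewrite ge_min; apply/orP; right.
by apply: IH; rewrite inE; move: Hc; rewrite (negPf ne).
Qed.

Lemma costpt_attained x C : C != [::] ->
  exists2 c, c \in C & costpt pos x C = sqdist x c.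
Proof.
case: C => [//|c0 cs] _.
suff Hmin : exists2 c, c \in c0 :: cs &
    foldr (fun c' m => Num.min (sqdist x c') m) (sqdist x c0) cs = sqdist x c.
  exact: Hmin.
elim: cs => [|c1 cs [c Hc E]] /=; first by exists c0; rewrite ?inE.
rewrite E /Num.min; case: ifP => _; first by exists c1; rewrite ?inE ?eqxx ?orbT.
by exists c => //; move: Hc; rewrite !inE => /orP[->|->]; rewrite ?orbT.
Qed.

Lemma costpt_ge0 x C : 0 <= costpt pos x C.
Proof.
have [->|ne] := eqVneq C [::]; first by [].
by have [c _ ->] := costpt_attained x ne; exact: sqnorm_ge0.
Qed.

Lemma costset_ge0 (A : pred T) C : 0 <= costset pos A C.
Proof. by apply: sumr_ge0 => x _; exact: costpt_ge0. Qed.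

Lemma costpt_catl x C D : C != [::] -> costpt pos x (C ++ D) <= costpt pos x C.
Proof.
by move=> ne; have [c Hc ->] := costpt_attained x ne; apply: costpt_le; rewrite mem_cat Hc.
Qed.

Lemma costpt_rcons x C y : C != [::] -> costpt pos x (rcons C y) <= costpt pos x C.
Proof. by move=> ne; rewrite -cats1; apply: costpt_catl. Qed.

Lemma costpt_rcons_new x C y : costpt pos x (rcons C y) <= sqdist x y.
Proof. by apply: costpt_le; rewrite mem_rcons inE eqxx. Qed.

Lemma costpt_triangle a x C : C != [::] ->
  costpt pos a C <= 2 * costpt pos x C + 2 * sqdist a x.
Proof.
move=> ne; have [c Hc Hx] := costpt_attained x ne.
apply: le_trans (costpt_le a Hc) _.
by rewrite Hx addrC; exact: sqdist_triangle.
Qed.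

End Cost.

(* The real-number core of the averaging lemma, for one sampled point a of a
   cluster A: n = |A|, D = cost(a, C), c = cost(A, C + a), S = cost(A, C),
   Q = sum_{x in A} ||x - a||^2 and O = OPT_1(A).  The hypotheses are the
   elementary facts relating these quantities (the last one is the relaxed
   triangle inequality summed over A). *)
Lemma d2_pointwise_bound (R : realFieldType) (n D c S Q O : R) :
  0 < n -> 0 <= D -> 0 <= c -> 0 <= S -> 0 <= O ->
  c <= S -> c <= Q -> O <= Q -> n * D <= 2 * S + 2 * Q ->
  n * D * c <= n * O * D + 4 * S * (Q - O).
Proof.
move=> n0 D0 c0 S0 O0 cS cQ OQ nD.
have y0 : 0 <= n * D by rewrite mulr_ge0 // ltW.
set y := n * D in y0 nD *.
have -> : n * O * D = y * O by rewrite /y; ring.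
have [cO|Oc] := lerP c O.
  have : y * c <= y * O by rewrite ler_wpM2l.
  have : 0 <= 4 * S * (Q - O) by rewrite mulr_ge0 ?mulr_ge0 // subr_ge0.
  lra.
have h1 : y * (c - O) <= (2 * S + 2 * Q) * (c - O).
  by rewrite ler_wpM2r // subr_ge0 ltW.
have [QS|SQ] := lerP Q S.
  have h2 : (2 * S + 2 * Q) * (c - O) <= (4 * S) * (Q - O).
    by apply: ler_pM; lra.
  lra.
have h2 : (2 * S + 2 * Q) * (c - O) <= (2 * S + 2 * Q) * (S - O).
  by rewrite ler_wpM2l //; lra.
have h3 : 0 <= (S + O) * (Q - S) by rewrite mulr_ge0 //; lra.
nra.
Qed.

(* One-dimensional form of "the average pairwise squared distance is at most
   twice the variance": sum_{a,x in A} (f x - f a)^2 <= 2 |A| sum_{x in A} (f x - g)^2. *)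
Lemma sum_pairwise_sq_le (R : realFieldType) (T : finType) (A : pred T)
    (f : T -> R) (g : R) :
  \sum_(a | A a) \sum_(x | A x) (f x - f a) ^+ 2 <=
  2 * (\sum_(x | A x) 1) * \sum_(x | A x) (f x - g) ^+ 2.
Proof.
set n := \sum_(x | A x) (1 : R).
set s1 := \sum_(x | A x) f x.
set s2 := \sum_(x | A x) f x ^+ 2.
have sum_sq (h : R) : \sum_(x | A x) (f x - h) ^+ 2 = s2 - 2 * h * s1 + n * h ^+ 2.
  rewrite /s2 /s1 /n mulr_sumr mulr_suml -sumrN -!big_split /=.
  by apply: eq_bigr => x _; ring.
have sum_const (h : R) : \sum_(x | A x) h = n * h.
  by rewrite /n mulr_suml; apply: eq_bigr => x _; rewrite mul1r.
have pairs : \sum_(a | A a) \sum_(x | A x) (f x - f a) ^+ 2 = 2 * n * s2 - 2 * s1 ^+ 2.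
  rewrite (eq_bigr _ (fun a _ => sum_sq (f a))) !big_split /= sum_const sumrN.
  by rewrite -mulr_suml -mulr_sumr -mulr_sumr -/s1 -/s2; ring.
rewrite pairs sum_sq.
have := sqr_ge0 (s1 - n * g); nra.
Qed.

Section Averaging.
Variables (R : realType) (d : nat) (T : finType) (pos : T -> 'rV[R]_d).

Lemma OPT1_le (A : pred T) (c : 'rV[R]_d) :
  OPT1 pos A <= \sum_(x | A x) sqnorm (pos x - c).
Proof.
apply: ge_inf; last by exists c.
by exists 0 => y [c' ->]; apply: sumr_ge0 => x _; exact: sqnorm_ge0.
Qed.

Lemma OPT1_lb (A : pred T) z :
  (forall c : 'rV[R]_d, z <= \sum_(x | A x) sqnorm (pos x - c)) -> z <= OPT1 pos A.
Proof.
move=> H; apply: lb_le_inf => [|y [c ->] //].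
by exists (\sum_(x | A x) sqnorm (pos x - 0)); exists 0.
Qed.

Lemma OPT1_ge0 (A : pred T) : 0 <= OPT1 pos A.
Proof. by apply: OPT1_lb => c; apply: sumr_ge0 => x _; exact: sqnorm_ge0. Qed.

(* Summing sum_pairwise_sq_le over the coordinates and minimising over the
   center: sum_{a,x in A} ||x - a||^2 <= 2 |A| OPT_1(A). *)
Lemma sum_pairwise_sqdist_le (A : pred T) :
  \sum_(a | A a) \sum_(x | A x) sqdist pos x a <=
  2 * (\sum_(x | A x) (1 : R)) * OPT1 pos A.
Proof.
set n := \sum_(x | A x) (1 : R).
have n0 : 0 <= n by apply: sumr_ge0.
have for_center (c : 'rV[R]_d) : \sum_(a | A a) \sum_(x | A x) sqdist pos x a <=
    2 * n * \sum_(x | A x) sqnorm (pos x - c).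
  rewrite /sqdist /sqnorm.
  under eq_bigr do rewrite exchange_big /=.
  rewrite [X in X <= _]exchange_big /= [X in _ <= _ * X]exchange_big /= mulr_sumr.
  apply: ler_sum => j _.
  under eq_bigr do under eq_bigr do rewrite !mxE.
  under [X in _ <= _ * X]eq_bigr do rewrite !mxE.
  exact: (sum_pairwise_sq_le A (fun x => pos x ord0 j) (c ord0 j)).
have [n_eq0|n_neq0] := eqVneq n 0.
  by have := for_center 0; rewrite n_eq0 !mulr0 !mul0r.
have n2 : 0 < 2 * n by rewrite mulr_gt0 // lt0r n_neq0.
rewrite -ler_pdivrMl //; apply: OPT1_lb => c.
by rewrite ler_pdivrMl //; exact: for_center.
Qed.

(* The averaging lemma: if the next center a is drawn from the cluster A with
   probability proportional to cost(a, C), the expected cost of A afterwards is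
   at most 5 OPT_1(A). *)
Lemma d2_sample_cluster_bound (A : pred T) (C : seq T) : C != [::] ->
  \sum_(a | A a) costpt pos a C * costset pos A (rcons C a) <=
  5 * OPT1 pos A * costset pos A C.
Proof.
move=> ne.
set S := costset pos A C; set n := \sum_(x | A x) (1 : R); set O := OPT1 pos A.
pose Q a := \sum_(x | A x) sqdist pos x a.
have [x0 Ax0|noA] := pickP A; last first.
  by rewrite big_pred0 // !mulr_ge0 ?OPT1_ge0 ?costset_ge0.
have n_gt0 : 0 < n by rewrite /n (bigD1 x0) //= ltr_pwDl ?ltr01 ?sumr_ge0.
have pointwise a : n * (costpt pos a C * costset pos A (rcons C a)) <=
    n * O * costpt pos a C + 4 * S * (Q a - O).
  rewrite mulrA; apply: d2_pointwise_bound.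
  - exact: n_gt0.
  - exact: costpt_ge0.
  - exact: costset_ge0.
  - exact: costset_ge0.
  - exact: OPT1_ge0.
  - by apply: ler_sum => x _; exact: costpt_rcons.
  - by apply: ler_sum => x _; exact: costpt_rcons_new.
  - exact: OPT1_le.
  - rewrite /n mulr_suml /S /Q /costset !mulr_sumr -big_split /=.
    by apply: ler_sum => x _; rewrite mul1r sqdistC; exact: costpt_triangle.
have sumQ : \sum_(a | A a) Q a - n * O <= n * O.
  by have := sum_pairwise_sqdist_le A; rewrite -/n -/O; lra.
have sumO : \sum_(a | A a) O = n * O.
  by rewrite /n mulr_suml; apply: eq_bigr => a _; rewrite mul1r.
rewrite -(ler_pM2l n_gt0) mulr_sumr.
apply: le_trans (ler_sum _ (fun a _ => pointwise a)) _.
rewrite big_split /= -!mulr_sumr sumrB sumO.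
have := ler_wpM2l (mulr_ge0 (ler0n _ 4) (costset_ge0 pos A C)) sumQ.
rewrite -/S -/(costset pos A C) -/S; lra.
Qed.

End Averaging.

Section GrowingCenters.
Variables (R : realType) (d : nat) (T : finType) (pos : T -> 'rV[R]_d).
Variables (k : nat) (P : T -> 'I_k).

Lemma covered_map j C : Defs.covered P j C = (j \in map P C).
Proof.
by rewrite -has_pred1 has_map /Defs.covered; apply: eq_has => y; rewrite /= eq_sym.
Qed.

Lemma covered_rcons j C x :
  Defs.covered P j (rcons C x) = (P x == j) || Defs.covered P j C.
Proof. by rewrite /Defs.covered has_rcons. Qed.

Lemma misses_aux_rcons pre s x :
  misses_aux P pre (rcons s x) =
  (misses_aux P pre s + has (fun y => P y == P x) (pre ++ s))%N.
Proof.
elim: s pre => [|y s IH] pre /=; first by rewrite cats0 addn0; case: has.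
by rewrite IH cat_rcons addnA.
Qed.

Lemma misses_rcons C x :
  misses P (rcons C x) = (misses P C + Defs.covered P (P x) C)%N.
Proof. by rewrite /misses misses_aux_rcons. Qed.

Lemma misses_count_aux pre s :
  (misses_aux P pre s + #|map P (pre ++ s)| = #|map P pre| + size s)%N.
Proof.
elim: s pre => [|y s IH] pre /=; first by rewrite cats0 addn0.
have := IH (rcons pre y); rewrite cat_rcons.
have -> : #|map P (rcons pre y)| = ((P y \notin map P pre) + #|map P pre|)%N.
  by rewrite -cardU1; apply: eq_card => j; rewrite map_rcons mem_rcons.
rewrite -[has _ pre]/(Defs.covered P (P y) pre) covered_map.
by case: (P y \in map P pre) => /=; lia.
Qed.

(* Every center is either a miss or the first one in its cluster. *)
Lemma misses_count C : (misses P C + #|map P C| = size C)%N.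
Proof. by have := misses_count_aux [::] C; rewrite /= card0. Qed.

Lemma misses_uncovered (i : 'I_k) C : ~~ Defs.covered P i C ->
  (size C <= misses P C + k.-1)%N.
Proof.
rewrite covered_map => ni.
have : (#|map P C| <= #|predC1 i|)%N.
  apply: subset_leq_card; apply/fintype.subsetP => j jC.
  by rewrite inE; apply: contraNneq ni => <-.
by rewrite cardC1 card_ord; have := misses_count C; lia.
Qed.

Definition Hterm j C : R :=
  if Defs.covered P j C
  then costset pos (Defs.cluster P j) (take (find (fun y => P y == j) C).+1 C)
  else 5 * OPT1 pos (Defs.cluster P j).

Lemma HtildeE C : Htilde pos P C = \sum_(j < k) Hterm j C.
Proof. by []. Qed.

Lemma Hterm_ge0 j C : 0 <= Hterm j C.
Proof.
by rewrite /Hterm; case: ifP => _; rewrite ?costset_ge0 ?mulr_ge0 ?OPT1_ge0.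
Qed.

Lemma Htilde_ge0 C : 0 <= Htilde pos P C.
Proof. by rewrite HtildeE; apply: sumr_ge0 => j _; exact: Hterm_ge0. Qed.

Lemma Hterm_rcons_covered j C x : Defs.covered P j C -> Hterm j (rcons C x) = Hterm j C.
Proof.
move=> cv; have hasC : has (fun y => P y == j) C by [].
by rewrite /Hterm covered_rcons cv orbT -cats1 find_cat hasC takel_cat // -has_find.
Qed.

Lemma Hterm_rcons_other j C x : ~~ Defs.covered P j C -> P x != j ->
  Hterm j (rcons C x) = Hterm j C.
Proof. by move=> /negPf ncv /negPf ne; rewrite /Hterm covered_rcons ncv ne. Qed.

Lemma Hterm_rcons_new j C x : ~~ Defs.covered P j C -> P x == j ->
  Hterm j (rcons C x) = costset pos (Defs.cluster P j) (rcons C x).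
Proof.
move=> /negPf ncv e; rewrite /Hterm covered_rcons e -cats1 find_cat.
by rewrite [has _ C]ncv /= e addn0 take_oversize // size_cat addn1.
Qed.

Lemma Hterm_rcons j C x : P x != j -> Hterm j (rcons C x) = Hterm j C.
Proof.
move=> ne; have [cv|ncv] := boolP (Defs.covered P j C).
  exact: Hterm_rcons_covered.
exact: Hterm_rcons_other.
Qed.

Lemma Htilde_rcons_miss C x : Defs.covered P (P x) C ->
  Htilde pos P (rcons C x) = Htilde pos P C.
Proof.
move=> cv; rewrite !HtildeE; apply: eq_bigr => j _.
have [<-|ne] := eqVneq (P x) j; first exact: Hterm_rcons_covered.
exact: Hterm_rcons.
Qed.

Lemma Htilde_rcons_new C x : ~~ Defs.covered P (P x) C ->
  Htilde pos P (rcons C x) = Htilde pos P C - 5 * OPT1 pos (Defs.cluster P (P x))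
     + costset pos (Defs.cluster P (P x)) (rcons C x).
Proof.
move=> ncv; rewrite !HtildeE (bigD1 (P x)) //= [in RHS](bigD1 (P x)) //=.
rewrite Hterm_rcons_new // {2}/Hterm (negPf ncv).
rewrite (eq_bigr (fun j => Hterm j C)) => [|j ne]; last by rewrite Hterm_rcons // eq_sym.
ring.
Qed.

Lemma costset_le_Hterm j C : C != [::] -> Defs.covered P j C ->
  costset pos (Defs.cluster P j) C <= Hterm j C.
Proof.
move=> ne cv; rewrite /Hterm cv; apply: ler_sum => x _.
rewrite -{1}(cat_take_drop (find (fun y => P y == j) C).+1 C).
by apply: costpt_catl; case: C ne {cv}.
Qed.

Variable (i : 'I_k).

Lemma Uncov_ge0 C : 0 <= Uncov pos P i C.
Proof. by rewrite /Uncov; case: ifP => _; rewrite ?costset_ge0. Qed.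

Lemma Uncov_rcons C x : C != [::] -> Uncov pos P i (rcons C x) <= Uncov pos P i C.
Proof.
move=> ne; rewrite /Uncov covered_rcons.
case: (P x == i) => /=; first by case: ifP => _; rewrite ?costset_ge0.
by case: ifP => _ //; apply: ler_sum => y _; exact: costpt_rcons.
Qed.

Lemma Uncov_hit C x : P x == i -> Uncov pos P i (rcons C x) = 0.
Proof. by move=> e; rewrite /Uncov covered_rcons e. Qed.

End GrowingCenters.

(* L is the number of
   misses still allowed at the start and j = Delta - M the number still allowed
   now; with q = L/(L+1),
     a_j = q^(j+1) (L - j) / (L+1),   b_j = (j+1) q^j / (L+1)^2,
   and a = 1, b = 0 once more than Delta misses have occurred. *)
Section Coefficients.
Variables (R : realType) (L Delta : nat).

Definition den : R := (L.+1)%:R.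
Definition q : R := L%:R / den.
Definition coefA (j : nat) : R := q ^+ j.+1 * (L%:R - j%:R) / den.
Definition coefB (j : nat) : R := (j.+1)%:R * q ^+ j / den ^+ 2.
Definition potA (M : nat) : R := if (M <= Delta)%N then coefA (Delta - M) else 1.
Definition potB (M : nat) : R := if (M <= Delta)%N then coefB (Delta - M) else 0.
Definition pot (M : nat) (U H : R) : R := potA M * U + potB M * H.

Lemma den_gt0 : 0 < den. Proof. by rewrite /den ltr0n. Qed.
Lemma den_neq0 : den != 0. Proof. by rewrite gt_eqF // den_gt0. Qed.
Lemma denE : den = L%:R + 1. Proof. by rewrite /den -addn1 natrD. Qed.
Lemma q_ge0 : 0 <= q. Proof. by rewrite /q divr_ge0 // ltW // den_gt0. Qed.

Lemma potA_ge0 M : (Delta <= L + M)%N -> 0 <= potA M.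
Proof.
move=> hM; rewrite /potA; case: ifP => // _.
rewrite /coefA divr_ge0 ?(ltW den_gt0) // mulr_ge0 ?exprn_ge0 ?q_ge0 //.
by rewrite subr_ge0 ler_nat; lia.
Qed.

Lemma potB_ge0 M : 0 <= potB M.
Proof.
rewrite /potB; case: ifP => // _.
by rewrite /coefB divr_ge0 ?exprn_ge0 ?(ltW den_gt0) // mulr_ge0 ?exprn_ge0 ?q_ge0.
Qed.

Lemma pot_monoU M U U' H : (Delta <= L + M)%N -> U' <= U -> pot M U' H <= pot M U H.
Proof. by move=> hM UU'; rewrite lerD2r ler_wpM2l // potA_ge0. Qed.

(* The coefficients make the one-step inequality a perfect square. *)
Lemma coef_step_identity j (U H : R) :
  (U + H) * (coefA j.+1 * U + coefB j.+1 * H) - H * (coefA j * U + coefB j * H)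
  = (q ^+ j * (L%:R - j%:R - 1) / den) * (q * U - H / den) ^+ 2.
Proof.
have e1 : (j.+1)%:R = j%:R + 1 :> R by rewrite -addn1 natrD.
have e2 : (j.+2)%:R = j%:R + 2 :> R by rewrite -addn2 natrD.
rewrite /coefA /coefB !exprS e1 e2 /q denE.
have hL : L%:R + 1 != 0 :> R by rewrite -denE den_neq0.
by field.
Qed.

Lemma coef_base_identity (U H : R) :
  (U + H) * (coefA 0 * U + coefB 0 * H) - H * U = (q * U - H / den) ^+ 2.
Proof.
rewrite /coefA /coefB /= expr1 expr0 subr0 /q denE.
have hL : L%:R + 1 != 0 :> R by rewrite -denE den_neq0.
by field.
Qed.

Lemma pot_step M (U H : R) : (Delta <= L + M)%N -> 0 <= U -> 0 <= H ->
  H * pot M.+1 U H <= (U + H) * pot M U H.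
Proof.
move=> hM U0 H0; rewrite /pot /potA /potB.
have [hMD|hMD] := ltnP M Delta.
  rewrite (ltnW hMD); have -> : (Delta - M = (Delta - M.+1).+1)%N by lia.
  rewrite -subr_ge0 coef_step_identity; apply: mulr_ge0; last exact: sqr_ge0.
  rewrite divr_ge0 ?(ltW den_gt0) // mulr_ge0 ?exprn_ge0 ?q_ge0 //.
  by rewrite -addrA -opprD natr1 subr_ge0 ler_nat; lia.
have [hMD2|hMD2] := leqP M Delta.
  have -> : M = Delta by apply/eqP; rewrite eqn_leq hMD hMD2.
  rewrite subnn mul1r mul0r addr0 -subr_ge0 coef_base_identity.
  exact: sqr_ge0.
rewrite !mul0r !addr0 !mul1r; nra.
Qed.

Lemma pot_step_weighted M (U H W : R) : (Delta <= L + M)%N -> 0 <= U ->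
  0 <= W -> W <= H ->
  W * pot M.+1 U H <= (U + W) * pot M U H.
Proof.
move=> hM U0 W0 WH; have H0 : 0 <= H by apply: le_trans WH.
have X0 : 0 <= pot M.+1 U H by rewrite addr_ge0 // mulr_ge0 ?potA_ge0 ?potB_ge0 //; lia.
have Y0 : 0 <= pot M U H by rewrite addr_ge0 // mulr_ge0 ?potA_ge0 ?potB_ge0.
have key := pot_step hM U0 H0.
have [UH0|UHneq0] := eqVneq (U + H) 0.
  have -> : W = 0 by lra.
  by rewrite mul0r mulr_ge0 // addr_ge0.
have UH_gt0 : 0 < U + H by rewrite lt0r UHneq0 addr_ge0.
rewrite -(ler_pM2l UH_gt0).
have WH' : W * (U + H) <= H * (U + W) by nra.
apply: le_trans (_ : (U + W) * (H * pot M.+1 U H) <= _).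
  by rewrite !mulrA [(U + H) * W]mulrC [(U + W) * H]mulrC ler_wpM2r.
by rewrite [X in _ <= X]mulrCA ler_wpM2l // addr_ge0.
Qed.

Lemma pot_start M (U H : R) : (M + L = Delta)%N -> pot M U H = q ^+ L / den * H.
Proof.
move=> hML; rewrite /pot /potA /potB -hML leq_addr addKn.
rewrite /coefA /coefB subrr mulr0 !mul0r add0r.
by congr (_ * _); have := den_neq0; rewrite /den => h0; field.
Qed.

(* (L/(L+1))^L / (L+1) <= 1 / (e (L-1)), from (1 - 1/(L+1))^(L+1) <= 1/e. *)
Lemma start_weight_le : (2 <= L)%N -> q ^+ L / den <= (expR 1 * (L.-1)%:R)^-1.
Proof.
move=> hL.
have L1 : 0 < (L.-1)%:R :> R by rewrite ltr0n; lia.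
have L_gt0 : 0 < L%:R :> R by rewrite ltr0n; lia.
have q_le : q <= expR (- den^-1).
  apply: le_trans (expR_ge1Dx _); rewrite /q denE.
  have hL' : L%:R + 1 != 0 :> R by rewrite -denE den_neq0.
  by rewrite le_eqVlt; apply/orP; left; apply/eqP; field.
have e_qpow : expR 1 * q ^+ L.+1 <= 1.
  have : q ^+ L.+1 <= expR (- den^-1) ^+ L.+1.
    by apply: lerXn2r; rewrite ?nnegrE ?q_ge0 ?expR_ge0.
  rewrite -expRM_natl mulrN -/den mulfV ?den_neq0 // => h.
  apply: le_trans (ler_wpM2l (ltW (expR_gt0 1)) h) _.
  by rewrite expRxMexpNx_1.
rewrite -[X in _ <= X]div1r ler_pdivlMr ?mulr_gt0 ?expR_gt0 //.
have -> : q ^+ L / den * (expR 1 * (L.-1)%:R) =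
    expR 1 * q ^+ L.+1 * ((L.-1)%:R / L%:R).
  rewrite exprS; have h0 := den_neq0; have h2 : L%:R != 0 :> R by rewrite gt_eqF.
  by rewrite /q; field; rewrite h2 addrC -denE h0.
have ratio_le1 : (L.-1)%:R / L%:R <= 1 :> R.
  by rewrite ler_pdivrMr // mul1r ler_nat; lia.
apply: le_trans (ler_wpM2r _ e_qpow) _; first by rewrite divr_ge0 // ltW.
by rewrite mul1r.
Qed.

End Coefficients.

Section TupleSums.
Variables (R : realType) (T : finType).

Definition tuple_split n (t : n.+1.-tuple T) : n.-tuple T * T :=
  (belast_tuple (thead t) (behead_tuple t), last (thead t) (behead t)).

Definition tuple_join n (p : n.-tuple T * T) : n.+1.-tuple T := rcons_tuple p.1 p.2.

Lemma tuple_headE n (t : n.+1.-tuple T) : val t = thead t :: behead t.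
Proof. by case: t => [[|a l] //= sz]. Qed.

Lemma tuple_splitK n : cancel (@tuple_split n) (@tuple_join n).
Proof. by move=> t; apply: val_inj; rewrite /= [RHS]tuple_headE lastI. Qed.

Lemma tuple_joinK n : cancel (@tuple_join n) (@tuple_split n).
Proof.
move=> [s x]; rewrite /tuple_split.
have /rcons_inj[e1 e2] : rcons (val s) x =
    rcons (belast (thead (tuple_join (s, x))) (behead (tuple_join (s, x))))
          (last (thead (tuple_join (s, x))) (behead (tuple_join (s, x)))).
  by rewrite -lastI -tuple_headE.
by congr (_, _) => //; apply: val_inj; rewrite /= -e1.
Qed.

Lemma sum_tuple_rcons n (F : seq T -> R) :
  \sum_(s : n.+1.-tuple T) F s = \sum_(s : n.-tuple T) \sum_(x : T) F (rcons s x).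
Proof.
rewrite pair_big /= (reindex (@tuple_join n)) //=.
by exists (@tuple_split n) => p _; [exact: tuple_joinK | exact: tuple_splitK].
Qed.

Fixpoint extend_sum (m : nat) (g : seq T -> R) (c : seq T) : R :=
  if m is m'.+1 then \sum_x extend_sum m' g (rcons c x) else g c.

Lemma extend_sumSr m g c :
  extend_sum m.+1 g c = extend_sum m (fun s => \sum_x g (rcons s x)) c.
Proof. by elim: m c => [|m IH] c //=; apply: eq_bigr => x _; rewrite -IH. Qed.

Lemma sum_prefix_full t (c : t.-tuple T) (g : seq T -> R) :
  \sum_(s : t.-tuple T | take t s == c) g s = g c.
Proof. by rewrite (big_pred1 c) // => s /=; rewrite take_oversize ?size_tuple. Qed.

Lemma sum_prefix t (c : t.-tuple T) n (g : seq T -> R) : (t <= n)%N ->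
  \sum_(s : n.-tuple T | take t s == c) g s = extend_sum (n - t) g c.
Proof.
elim: n g => [|n IH] g ht.
  have t0 : t = 0%N by lia.
  by subst t; rewrite sum_prefix_full.
have [tn|tn] := eqVneq t n.+1; first by subst t; rewrite sum_prefix_full subnn.
have -> : (n.+1 - t = (n - t).+1)%N by lia.
rewrite big_mkcond (sum_tuple_rcons n (fun s => if take t s == c then g s else 0)).
rewrite extend_sumSr -IH; last by lia.
rewrite [RHS]big_mkcond; apply: eq_bigr => s _.
have take_rcons x : take t (rcons s x) = take t s.
  by rewrite -cats1 takel_cat // size_tuple; lia.
case: ifP => hs; first by apply: eq_bigr => x _; rewrite take_rcons hs.
by apply: big1 => x _; rewrite take_rcons hs.
Qed.

End TupleSums.

Section Expectation.
Variables (R : realType) (d : nat) (T : finType) (pos : T -> 'rV[R]_d).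

Fixpoint expect (m : nat) (f : seq T -> R) (C : seq T) : R :=
  if m is m'.+1 then \sum_x Defs.step pos C x * expect m' f (rcons C x) else f C.

Lemma pr_aux_rcons pre s x :
  pr_aux pos pre (rcons s x) = pr_aux pos pre s * Defs.step pos (pre ++ s) x.
Proof.
elim: s pre => [|y s IH] pre /=; first by rewrite mulr1 mul1r cats0.
by rewrite IH cat_rcons mulrA.
Qed.

Lemma seqprob_rcons s x : seqprob pos (rcons s x) = seqprob pos s * Defs.step pos s x.
Proof. exact: pr_aux_rcons. Qed.

Lemma extend_sum_seqprob m f c :
  extend_sum m (fun s => seqprob pos s * f s) c = seqprob pos c * expect m f c.
Proof.
elim: m c => [|m IH] c //=; rewrite mulr_sumr; apply: eq_bigr => x _.
by rewrite IH seqprob_rcons mulrA.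
Qed.

Lemma cond_expE t (c : t.-tuple T) N f : (t <= N)%N -> seqprob pos c != 0 ->
  cond_exp pos N f c = expect (N - t) f c.
Proof.
move=> tN nz; rewrite /cond_exp size_tuple.
by rewrite (sum_prefix c (fun s => seqprob pos s * f s)) // extend_sum_seqprob mulrC mulKf.
Qed.

End Expectation.

Section Induction.
Variables (R : realType) (d : nat) (T : finType) (pos : T -> 'rV[R]_d).
Variables (k : nat) (P : T -> 'I_k) (i : 'I_k) (L Delta : nat).

Local Notation expUncov m C := (expect pos m (Uncov pos P i) C).

Definition potC (C : seq T) : R :=
  pot L Delta (misses P C) (Uncov pos P i C) (Htilde pos P C).

Lemma rcons_neq0 (C : seq T) x : rcons C x != [::].
Proof. by case: C. Qed.

(* Once U(P_i, C) = 0 it stays 0, so the expectation vanishes. *)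
Lemma expUncov_eq0 m C : C != [::] -> Uncov pos P i C = 0 -> expUncov m C = 0.
Proof.
elim: m C => [|m IH] C ne U0 //=.
apply: big1 => x _; rewrite IH ?mulr0 ?rcons_neq0 //.
by apply/eqP; rewrite eq_le Uncov_ge0 andbT -U0 Uncov_rcons.
Qed.

Lemma costset_clusters C :
  costset pos predT C = \sum_(j < k) costset pos (Defs.cluster P j) C.
Proof. by rewrite /costset (partition_big P predT). Qed.

Lemma step_D2 C x : C != [::] -> costset pos predT C != 0 ->
  Defs.step pos C x = costpt pos x C / costset pos predT C.
Proof. by case: C => // c0 cs _ /negPf tot_neq0; rewrite /Defs.step tot_neq0. Qed.

(* Upper bound on the potential after appending x to C, in terms of C. *)
Definition next_bound (C : seq T) (x : T) : R :=
  if P x == i then 0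
  else if Defs.covered P (P x) C
  then pot L Delta (misses P C).+1 (Uncov pos P i C) (Htilde pos P C)
  else pot L Delta (misses P C) (Uncov pos P i C)
         (Htilde pos P C - 5 * OPT1 pos (Defs.cluster P (P x))
          + costset pos (Defs.cluster P (P x)) (rcons C x)).

(* The weight by which cost(P_j, C) enters the average of next_bound. *)
Definition cluster_weight (C : seq T) (j : 'I_k) : R :=
  if j == i then 0
  else if Defs.covered P j C
  then pot L Delta (misses P C).+1 (Uncov pos P i C) (Htilde pos P C)
  else potC C.

(* If the potential bound holds with m steps remaining, next_bound C x bounds
   the expectation after appending x: a hit in P_i makes U vanish, a miss
   increments M, and a center in a new cluster updates H~ (U can only drop). *)
Lemma expUncov_rcons_le m C x :
  (forall C', C' != [::] -> (size C' + m = k + Delta)%N ->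
     (Delta <= L + misses P C')%N -> expUncov m C' <= potC C') ->
  C != [::] -> (size C + m.+1 = k + Delta)%N -> (Delta <= L + misses P C)%N ->
  expUncov m (rcons C x) <= next_bound C x.
Proof.
move=> IH ne hsize hM.
have hsize' : (size (rcons C x) + m = k + Delta)%N by rewrite size_rcons -hsize addSnnS.
have Ux : Uncov pos P i (rcons C x) <= Uncov pos P i C by exact: Uncov_rcons.
rewrite /next_bound; case: ifP => hit; first by rewrite expUncov_eq0 ?rcons_neq0 ?Uncov_hit.
have hM' : (Delta <= L + misses P (rcons C x))%N.
  by rewrite misses_rcons; apply: leq_trans hM _; rewrite leq_add2l leq_addr.
apply: le_trans (IH _ (rcons_neq0 C x) hsize' hM') _.
rewrite /potC misses_rcons; case: ifP => cov /=.
  by rewrite addn1 Htilde_rcons_miss ?cov //; apply: pot_monoU => //; lia.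
by rewrite addn0 Htilde_rcons_new ?cov //; apply: pot_monoU.
Qed.

(* Averaging next_bound over the D^2-sampled centers of one cluster P_j; for a
   new cluster this is where the averaging lemma d2_sample_cluster_bound enters. *)
Lemma cluster_next_bound C j : C != [::] ->
  \sum_(x | P x == j) costpt pos x C * next_bound C x <=
  costset pos (Defs.cluster P j) C * cluster_weight C j.
Proof.
move=> ne; rewrite /cluster_weight.
have cost_sum F : \sum_(x | P x == j) costpt pos x C * F =
    costset pos (Defs.cluster P j) C * F by rewrite -mulr_suml.
have [->|nji] := eqVneq j i.
  by rewrite mulr0 big1 // => x /eqP hx; rewrite /next_bound hx eqxx mulr0.
rewrite /next_bound (eq_bigr (fun x => costpt pos x C *
    (if Defs.covered P j C then pot L Delta (misses P C).+1 (Uncov pos P i C)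
       (Htilde pos P C) else pot L Delta (misses P C) (Uncov pos P i C)
       (Htilde pos P C - 5 * OPT1 pos (Defs.cluster P j)
        + costset pos (Defs.cluster P j) (rcons C x))))); last first.
  by move=> x /eqP hx; rewrite hx (negPf nji).
case: ifP => cov; first by rewrite cost_sum.
set O := OPT1 pos (Defs.cluster P j).
set c := fun x => costset pos (Defs.cluster P j) (rcons C x).
rewrite (eq_bigr (fun x => costpt pos x C * potC C +
    potB R L Delta (misses P C) * (costpt pos x C * c x - 5 * O * costpt pos x C)));
  last by move=> x _; rewrite /potC /pot /c; ring.
rewrite big_split /= cost_sum -mulr_sumr sumrB -mulr_sumr gerDl.
rewrite mulr_ge0_le0 ?potB_ge0 // subr_le0.
exact: d2_sample_cluster_bound.
Qed.

(* The weighted average of the cluster weights is at most the current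
   potential; this is the inequality pot_step_weighted, with W the cost of the
   covered clusters, which is bounded by H~. *)
Lemma cluster_weight_average C : C != [::] -> ~~ Defs.covered P i C ->
  (Delta <= L + misses P C)%N ->
  \sum_(j < k) costset pos (Defs.cluster P j) C * cluster_weight C j <=
  costset pos predT C * potC C.
Proof.
move=> ne unc hM.
set S := fun j => costset pos (Defs.cluster P j) C.
set U := Uncov pos P i C; set H := Htilde pos P C.
set Lnext := pot L Delta (misses P C).+1 U H.
set W := \sum_(j < k | Defs.covered P j C) S j.
have UE : U = S i by rewrite /U /Uncov (negPf unc).
have W0 : 0 <= W by apply: sumr_ge0 => j _; exact: costset_ge0.
have WH : W <= H.
  rewrite /H HtildeE (bigID (fun j => Defs.covered P j C)) /= -[W]addr0.
  apply: lerD; first by apply: ler_sum => j cj; exact: costset_le_Hterm.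
  by apply: sumr_ge0 => j _; exact: Hterm_ge0.
have gap : costset pos predT C * potC C -
    \sum_(j < k) S j * cluster_weight C j = U * potC C + W * (potC C - Lnext).
  rewrite costset_clusters mulr_suml -sumrB (bigD1 i) //= /cluster_weight eqxx.
  rewrite -/(S i) -UE mulr0 subr0 /W mulr_suml big_mkcond [in RHS]big_mkcond /=.
  congr (_ + _); apply: eq_bigr => j _.
  case: (eqVneq j i) => [->|_] /=; rewrite ?(negPf unc) //=.
  by case: ifP => _; rewrite /Lnext /S /U /H; ring.
have := pot_step_weighted hM (Uncov_ge0 pos P i C) W0 WH.
rewrite -/U -/H -/Lnext -/(potC C) -subr_ge0 => h.
rewrite -subr_ge0 gap.
by have -> : U * potC C + W * (potC C - Lnext) = (U + W) * potC C - W * Lnext by ring.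
Qed.

Lemma potential_bound m C : C != [::] -> (size C + m = k + Delta)%N ->
  (Delta <= L + misses P C)%N -> expUncov m C <= potC C.
Proof.
elim: m C => [|m IH] C ne hsize hM.
  rewrite /potC /pot /= /Uncov; case: ifP => cov.
    by rewrite mulr0 add0r mulr_ge0 ?potB_ge0 ?Htilde_ge0.
  have many_misses : (k + Delta <= misses P C + k.-1)%N.
    by rewrite -hsize addn0; exact: misses_uncovered (negbT cov).
  have k_gt0 : (0 < k)%N by case: (k) i => [[]|].
  have too_many : (misses P C <= Delta)%N = false by apply/negbTE; rewrite -ltnNge; lia.
  by rewrite /potA /potB too_many mul1r mul0r addr0.
have [U0|Uneq0] := eqVneq (Uncov pos P i C) 0.
  rewrite expUncov_eq0 // /potC /pot U0 mulr0 add0r.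
  by rewrite mulr_ge0 ?potB_ge0 ?Htilde_ge0.
have unc : ~~ Defs.covered P i C by apply: contra Uneq0 => cv; rewrite /Uncov cv.
have tot_gt0 : 0 < costset pos predT C.
  apply: lt_le_trans (_ : Uncov pos P i C <= _).
    by rewrite lt0r Uneq0 Uncov_ge0.
  rewrite /Uncov (negPf unc) costset_clusters (bigD1 i) //= lerDl.
  by apply: sumr_ge0 => j _; exact: costset_ge0.
have avg : \sum_x costpt pos x C * expUncov m (rcons C x) <= costset pos predT C * potC C.
  apply: le_trans (_ : \sum_x costpt pos x C * next_bound C x <= _).
    apply: ler_sum => x _; rewrite ler_wpM2l ?costpt_ge0 //.
    exact: expUncov_rcons_le IH ne hsize hM.
  rewrite (partition_big P predT) //=.
  apply: le_trans (cluster_weight_average ne unc hM).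
  by apply: ler_sum => j _; exact: cluster_next_bound.
rewrite /= (eq_bigr _ (fun x _ => congr1 (fun z => z * _) (step_D2 x ne (lt0r_neq0 tot_gt0)))).
under eq_bigr do rewrite mulrAC.
by rewrite -mulr_suml ler_pdivrMr // mulrC.
Qed.

End Induction.

Unset Implicit Arguments.

Theorem mainTheorem7 (R : realType) (d k Delta t : nat) (T : finType)
    (pos : T -> 'rV[R]_d) (P : T -> 'I_k) (i : 'I_k) (c : t.-tuple T) :
  injective pos ->
  optimal_clustering pos P ->
  (1 <= t)%N -> (t <= k + Delta)%N ->
  0 < seqprob pos c ->
  (misses P c + 2 <= Delta)%N ->
  cond_exp pos (k + Delta) (Uncov pos P i) c
    <= Htilde pos P c / (expR 1 * (Delta - misses P c - 1)%:R).
Proof.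
move=> _ _ t_ge1 t_le prob_gt0 few_misses.
set L := (Delta - misses P c)%N.
have c_neq0 : (c : seq T) != [::] by rewrite -size_eq0 size_tuple; lia.
rewrite cond_expE // ?lt0r_neq0 //.
apply: le_trans (potential_bound pos i (L := L) (Delta := Delta) c_neq0 _ _) _.
- by rewrite size_tuple; lia.
- by rewrite /L; lia.
rewrite /potC (pot_start _ _ (_ : misses P c + L = Delta)%N); last by rewrite /L; lia.
have -> : (Delta - misses P c - 1 = L.-1)%N by rewrite /L; lia.
by rewrite mulrC ler_wpM2l ?Htilde_ge0 // start_weight_le // /L; lia.
Qed.
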